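(* Let $G$ be a finite soluble group such that $\mathrm{pr}^*(G)\ge\epsilon>0$. If $p$ is a prime with $p>(2/\epsilon)^{6/\epsilon}$, then every Sylow $p$-subgroup of $G$ is contained in $F(G)$.
   Context: For subsets $X,Y$ of a finite group, $\Pr(X,Y)=|\{(x,y)\in X\times Y: xy=yx\}|/(|X||Y|)$. $\mathrm{pr}^*(G)$ is the maximum real number $\epsilon$ such that for every pair of distinct primes $p,q$ dividing $|G|$ there exist a Sylow $p$-subgroup $P$ and a Sylow $q$-subgroup $Q$ of $G$ with $\Pr(P,Q)\ge\epsilon$. $F(G)$ is the Fitting subgroup of $G$. *)

From HB Require Import structures.
From mathcomp Require Import all_boot all_order all_algebra all_fingroup all_solvable.
From mathcomp Require Import reals exp.
Set Implicit Arguments. Unset Strict Implicit. Unset Printing Implicit Defensive.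
Import Order.TTheory GRing.Theory Num.Theory.
Local Open Scope ring_scope.
Local Open Scope group_scope.

Definition commPr (R : realType) (gT : finGroupType) (X Y : {set gT}) : R :=
  (#|[set xy in setX X Y | (xy.1 * xy.2)%g == (xy.2 * xy.1)%g]|%:R /
   (#|X| * #|Y|)%:R)%R.

(* pr*(G) >= eps : since pr*(G) is the maximum eps' such that for all distinct
   primes p, q dividing |G| there are Sylow subgroups P, Q with Pr(P,Q) >= eps',
   pr*(G) >= eps holds exactly when this condition holds at eps. *)
Definition prstar_ge (R : realType) (gT : finGroupType) (G : {group gT}) (eps : R) : Prop :=
  forall p q : nat, prime p -> prime q -> p != q -> (p %| #|G|)%N -> (q %| #|G|)%N ->
    exists P Q : {group gT},
      [/\ P \in 'Syl_p(G), Q \in 'Syl_q(G) & (eps <= commPr R P Q)%R].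

(* Let P be a Sylow p-subgroup and r another prime divisor of |G|, and pick
   Sylow subgroups P', Q with Pr(P', Q) >= eps.  An element of Q outside
   C_Q(P') centralises at most |P'|/p elements of the p-group P', so
   Pr(P', Q) <= 1/|Q : C_Q(P')| + 1/p; since the bound on p gives p eps > 2,
   |Q : C_Q(P')| < p, and then every r-power dividing |G : N_G(P)| is < p.
   Now walk down a series of normal subgroups K of G with prime-power
   factors L/K: if PL is normal, the Frattini argument makes |G : N_G(PK)|
   a divisor of |L : K| dividing |G : N_G(P)| and congruent to 1 mod p, so
   it is 1.  At K = 1, P is a normal nilpotent subgroup, hence in F(G). *)

From HB Require Import structures.
From mathcomp Require Import all_boot all_order all_algebra all_fingroup all_solvable.
From mathcomp Require Import reals exp.
From mathcomp Require Import lra ring.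
Set Implicit Arguments.
Unset Strict Implicit.
Unset Printing Implicit Defensive.

Import Order.TTheory GRing.Theory Num.Theory.
Local Open Scope group_scope.

Section CommutingPairs.
Variable gT : finGroupType.
Implicit Types X Y : {group gT}.

Lemma card_commuting_pairs X Y :
  #|[set xy in setX X Y | xy.1 * xy.2 == xy.2 * xy.1]| =
  (\sum_(y in Y) #|'C_X[y]|)%N.
Proof.
rewrite -sum1_card.
rewrite (eq_bigl (fun u => (u.1 \in X) && ((u.2 \in Y) && (u.1 * u.2 == u.2 * u.1))));
  last by move=> [x y]; rewrite !inE /= andbA.
rewrite -(pair_big_dep (mem X) (fun x y => (y \in Y) && (x * y == y * x)) (fun _ _ => 1%N)).
rewrite (exchange_big_dep (mem Y)) /=; last by move=> x y _ /andP[].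
apply: eq_bigr => y Yy; rewrite -sum1_card; apply: eq_bigl => x.
by rewrite Yy in_setI; congr (_ && _); apply/eqP/cent1P.
Qed.

Lemma pgroup_card_cent1 (p : nat) X y : p.-group X -> y \notin 'C(X) ->
  (p * #|'C_X[y]| <= #|X|)%N.
Proof.
move=> pX notCy; rewrite -(Lagrange (subsetIl X 'C[y])) mulnC leq_mul2l.
have [k def_k] := p_natP (pnat_dvd (dvdn_indexg X 'C_X[y]) pX).
have : (1 < #|X : 'C_X[y]|)%N.
  by rewrite indexg_gt1 subsetI subxx sub_cent1.
rewrite def_k; case: k {def_k} => // k gt1.
by rewrite dvdn_leq ?orbT ?(ltnW gt1) // expnS dvdn_mulr.
Qed.

Lemma sum_card_cent1_pgroup (p : nat) X Y : p.-group X ->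
  (p * \sum_(y in Y) #|'C_X[y]| <= #|X| * (p * #|'C_Y(X)| + #|Y|))%N.
Proof.
move=> pX.
have card_CYX : (\sum_(y in Y) (y \in 'C(X)) = #|'C_Y(X)|)%N.
  rewrite (eq_bigr (fun y => if y \in 'C(X) then 1 else 0)%N) => [|y _]; last first.
    by case: (y \in 'C(X)).
  by rewrite -big_mkcondr sum1dep_card; apply: eq_card => y; rewrite !inE.
have ->: (#|X| * (p * #|'C_Y(X)| + #|Y|) =
          \sum_(y in Y) (p * #|X| * (y \in 'C(X)) + #|X|))%N.
  rewrite big_split -big_distrr sum_nat_const card_CYX /=.
  by rewrite mulnDr mulnA (mulnC #|X| p) (mulnC #|Y|).
rewrite big_distrr leq_sum // => y _.
have [Cy | notCy] := boolP (y \in 'C(X)); last by rewrite muln0 pgroup_card_cent1.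
by rewrite muln1 (leq_trans _ (leq_addr _ _)) // leq_mul2l subset_leq_card ?subsetIl ?orbT.
Qed.
End CommutingPairs.

Section CommutingProbability.
Variables (R : realType) (gT : finGroupType).
Implicit Types X Y : {group gT}.

Lemma commPr_le1 X Y : (commPr R X Y <= 1)%R.
Proof.
have XY_gt0 : (0 < #|X| * #|Y|)%N by rewrite muln_gt0 !cardG_gt0.
rewrite /commPr ler_pdivrMr ?ltr0n // mul1r ler_nat -cardsX.
by apply: subset_leq_card; apply/subsetP => u; rewrite inE => /andP[].
Qed.

Lemma commPr_pgroup_le (p : nat) X Y : prime p -> p.-group X ->
  (commPr R X Y <= #|Y : 'C_Y(X)|%:R^-1 + p%:R^-1)%R.
Proof.
move=> pr_p pX; rewrite /commPr card_commuting_pairs.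
have := sum_card_cent1_pgroup Y pX; rewrite -(Lagrange (subsetIl Y 'C(X))).
set S := (\sum_(y in Y) _)%N; set c := #|'C_Y(X)|; set m := #|Y : _|.
have c_gt0 : (0 < c)%N by rewrite cardG_gt0.
have m_gt0 : (0 < m)%N by rewrite indexg_gt0.
have x_gt0 := cardG_gt0 X.
rewrite -(ler_nat R) !natrM natrD !natrM => le_S.
have p_gt0 : (0 < p%:R :> R)%R by rewrite ltr0n prime_gt0.
rewrite ler_pdivrMr ?mulr_gt0 ?ltr0n // -(ler_pM2l p_gt0).
have -> : (p%:R * ((m%:R^-1 + p%:R^-1) * (#|X|%:R * (c%:R * m%:R)))
          = #|X|%:R * (p%:R * c%:R + c%:R * m%:R) :> R)%R.
  by field; rewrite (gt_eqF p_gt0) pnatr_eq0 -lt0n m_gt0.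
exact: le_S.
Qed.

Lemma index_cent_lt_commPr (p : nat) X Y (eps : R) : prime p -> p.-group X ->
  (eps <= commPr R X Y)%R -> (2 < p%:R * eps)%R -> (#|Y : 'C_Y(X)| < p)%N.
Proof.
move=> pr_p pX le_eps lt2; rewrite ltnNge; apply/negP => le_pm.
have p_gt0 : (0 < p%:R :> R)%R by rewrite ltr0n prime_gt0.
have : (eps <= p%:R^-1 + p%:R^-1)%R.
  apply: (le_trans le_eps); apply: (le_trans (commPr_pgroup_le Y pr_p pX)).
  by rewrite lerD2r lef_pV2 ?ler_nat // posrE ltr0n (leq_trans (prime_gt0 pr_p)).
rewrite -(ler_pM2l p_gt0) mulrDr mulfV ?(gt_eqF p_gt0) //.
by rewrite leNgt lt2.
Qed.

End CommutingProbability.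

Lemma mul_gt2_powR_lt (R : realType) (eps x : R) : (0 < eps <= 1)%R ->
  (powR (2 / eps) (6 / eps) < x)%R -> (2 < x * eps)%R.
Proof.
move=> /andP[eps_gt0 eps_le1] lt_x.
have base_ge1 : (1 <= 2 / eps)%R by rewrite ler_pdivlMr // mul1r; lra.
have exp_ge1 : (1 <= 6 / eps)%R by rewrite ler_pdivlMr // mul1r; lra.
by rewrite -ltr_pdivrMr //; apply: le_lt_trans (le1r_powR base_ge1 exp_ge1) lt_x.
Qed.

Lemma pnat_modn_eq1 (p a : nat) : p.-nat a -> (a %% p = 1 -> a = 1)%N.
Proof. by case/p_natP=> [[|k] ->] //; rewrite expnS modnMr. Qed.

Section SylowIndex.
Variable gT : finGroupType.
Implicit Types G H P Q X : {group gT}.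

Lemma rnat_dvd_index_norm (r a : nat) G Q X : r.-Sylow(G) Q -> r.-nat a ->
  a %| #|G : 'N_G(X)| -> a %| #|Q : 'C_Q(X)|.
Proof.
move=> sylQ ra dvd_a; set C := 'C_Q(X).
have sCN : C \subset 'N_G(X).
  rewrite subsetI (subset_trans (subsetIl _ _) (pHall_sub sylQ)).
  exact: subset_trans (subsetIr _ _) (cent_sub _).
have dvd_aC : (a * #|C| %| #|G|)%N.
  by rewrite -(Lagrange (subsetIl G 'N(X))) mulnC dvdn_mul // cardSg.
have rC : r.-nat (a * #|C|)%N.
  by rewrite pnatM ra; apply: pgroupS (subsetIl _ _) (pHall_pgroup sylQ).
have := partn_dvd r (cardG_gt0 G) dvd_aC.
rewrite part_pnat_id // -(card_Hall sylQ) -(Lagrange (subsetIl Q 'C(X))) -/C.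
by rewrite [(#|C| * _)%N]mulnC dvdn_pmul2r ?cardG_gt0.
Qed.

Lemma index_Sylow_overnorm_mod (p : nat) G H P : prime p -> p.-Sylow(G) P ->
  'N_G(P) \subset H -> H \subset G -> (#|G : H| %% p = 1)%N.
Proof.
move=> pr_p sylP sNH sHG.
have sPH : P \subset H by apply: subset_trans sNH; rewrite subsetI (pHall_sub sylP) normG.
have sylPH : p.-Sylow(H) P := pHall_subl sPH sHG sylP.
have card_SylH : #|'Syl_p(H)| = #|H : 'N_G(P)|.
  rewrite (card_Syl sylPH); congr #|_ : _|; apply/eqP.
  by rewrite eqEsubset setSI //= subsetI sNH subsetIr.
have := card_Syl_mod G pr_p.
rewrite (card_Syl sylP) -(Lagrange_index sHG sNH) -card_SylH.
by rewrite -modnMm card_Syl_mod // muln1 modn_mod.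
Qed.

End SylowIndex.

Lemma solvable_normal_pfactor (gT : finGroupType) (G K : {group gT}) :
  solvable G -> K <| G -> K \proper G ->
  exists r (L : {group gT}), [/\ prime r, L <| G, K \proper L & r.-nat #|L : K|].
Proof.
move=> solG nsKG ltKG; have [sKG nKG] := andP nsKG.
have ntGK : G / K != 1 by rewrite -subG1 quotient_sub1 //; apply: proper_subn.
have [H [sHGK nsHGK ntH abelH]] :=
  solvable_norm_abelem (quotient_sol K solG) (normal_refl _) ntGK.
have [r pr_r /abelem_pgroup rH] := is_abelemP abelH.
exists r, (coset K @*^-1 H)%G; split => //.
- by rewrite -(quotientGK nsKG) cosetpre_normal.
- rewrite properEneq sub_cosetpre andbT; apply: contra ntH => /eqP defK.
  by rewrite -(cosetpreK H) -defK trivg_quotient.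
- have sLG : coset K @*^-1 H \subset G by rewrite -(quotientGK nsKG) cosetpreSK.
  by rewrite -card_quotient ?(subset_trans sLG nKG) //= cosetpreK.
Qed.

Section SolvableSylowNormal.
Variables (gT : finGroupType) (G P : {group gT}) (p : nat).
Hypotheses (pr_p : prime p) (sylP : p.-Sylow(G) P).
Implicit Types K L : {group gT}.

Lemma normG_sub_norm_joinG K : K <| G -> 'N_G(P) \subset 'N_G(P <*> K).
Proof.
case/andP=> _ nKG.
by rewrite subsetI subsetIl normsY ?subsetIr // (subset_trans (subsetIl _ _) nKG).
Qed.

Lemma index_norm_joinG_dvd K L : K <| G -> L <| G -> G \subset 'N(P <*> L) ->
  #|G : 'N_G(P <*> K)| %| #|L : K|.
Proof.
move=> nsKG /andP[sLG nLG] nPL_G.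
set N := 'N_G(P <*> K).
have sNP_N : 'N_G(P) \subset N := normG_sub_norm_joinG nsKG.
have sPN : P \subset N.
  by apply: subset_trans sNP_N; rewrite subsetI (pHall_sub sylP) normG.
have nsPL : P <*> L <| G by rewrite /normal join_subG (pHall_sub sylP) sLG.
have sylPL : p.-Sylow(P <*> L) P := pHall_subl (joing_subl _ _) (normal_sub nsPL) sylP.
have defG : N * L = G.
  apply/eqP; rewrite eqEsubset mul_subG ?subsetIl //=.
  rewrite -(norm_joinEl (subset_trans (subsetIl _ _) nLG)) -(Frattini_arg nsPL sylPL).
  rewrite mul_subG //; last exact: subset_trans sNP_N (joing_subl _ _).
  by rewrite join_subG joing_subr (subset_trans sPN) ?joing_subl.
rewrite -defG indexMg indexgS // subsetI (normal_sub nsKG).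
exact: subset_trans (joing_subr P K) (normG _).
Qed.

Hypothesis rnat_index_modp_eq1 : forall r a, prime r -> r.-nat a ->
  a %| #|G : 'N_G(P)| -> (a %% p = 1)%N -> a = 1%N.

Lemma norm_joinG_rfactor r K L : prime r -> K <| G -> L <| G -> r.-nat #|L : K| ->
  G \subset 'N(P <*> L) -> G \subset 'N(P <*> K).
Proof.
move=> pr_r nsKG nsLG rLK nPL_G.
have sNG : 'N_G(P <*> K) \subset G := subsetIl _ _.
have sNP_N := normG_sub_norm_joinG nsKG.
have dvd_a := index_norm_joinG_dvd nsKG nsLG nPL_G.
have a_eq1 : #|G : 'N_G(P <*> K)| = 1%N.
  apply: (rnat_index_modp_eq1 pr_r (pnat_dvd dvd_a rLK)).
    by rewrite -(Lagrange_index sNG sNP_N) dvdn_mulr.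
  exact: index_Sylow_overnorm_mod pr_p sylP sNP_N sNG.
by apply: subset_trans (subsetIr G _); rewrite -indexg_eq1 a_eq1.
Qed.

Lemma sol_norm_joinG K : solvable G -> K <| G -> G \subset 'N(P <*> K).
Proof.
move=> solG; have [n] := ubnP #|G : K|; elim: n K => // n IHn K ltKn nsKG.
have [-> | neKG] := eqVneq K G; first by rewrite (joing_idPr (pHall_sub sylP)) normG.
have ltKG : K \proper G by rewrite properEneq neKG normal_sub.
have [r [L [pr_r nsLG ltKL rLK]]] := solvable_normal_pfactor solG nsKG ltKG.
have ltLK : #|G : L| < #|G : K|.
  rewrite -(Lagrange_index (normal_sub nsLG) (proper_sub ltKL)).
  by rewrite ltn_Pmulr ?indexg_gt0 // indexg_gt1 proper_subn.
exact: norm_joinG_rfactor pr_r nsKG nsLG rLK (IHn L (leq_trans ltLK ltKn) nsLG).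
Qed.

Lemma sol_Sylow_normal : solvable G -> P <| G.
Proof.
move=> solG; have := sol_norm_joinG solG (normal1 G).
by rewrite joingG1 /normal (pHall_sub sylP).
Qed.

End SolvableSylowNormal.

Lemma prstar_rnat_index_Syl_lt (R : realType) (gT : finGroupType) (G P : {group gT})
    (eps : R) (p r a : nat) :
  (0 < eps)%R -> prstar_ge G eps -> prime p -> p %| #|G| ->
  (powR (2 / eps) (6 / eps) < p%:R)%R -> p.-Sylow(G) P ->
  prime r -> r != p -> r.-nat a -> a %| #|G : 'N_G(P)| -> a < p.
Proof.
move=> eps_gt0 prG pr_p pG lt_p sylP pr_r neq_rp ra dvd_a.
have [rG | r'G] := boolP (r %| #|G|); last first.
  have r'a : r^'.-nat a by rewrite (pnat_dvd (dvdn_trans dvd_a (dvdn_indexg _ _))) ?p'natE.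
  by rewrite (pnat_1 ra r'a) prime_gt1.
have neq_pr : p != r by rewrite eq_sym.
have [P' [Q [sylP' sylQ le_eps]]] := prG p r pr_p pr_r neq_pr pG rG.
rewrite !inE in sylP' sylQ.
have lt2 : (2 < p%:R * eps)%R.
  by apply: mul_gt2_powR_lt lt_p; rewrite eps_gt0 (le_trans le_eps (commPr_le1 _ _ _)).
rewrite -(card_Syl sylP) (card_Syl sylP') in dvd_a.
apply: leq_ltn_trans (dvdn_leq (indexg_gt0 _ _) (rnat_dvd_index_norm sylQ ra dvd_a)) _.
exact: index_cent_lt_commPr pr_p (pHall_pgroup sylP') le_eps lt2.
Qed.

Theorem lemma4p5 (R : realType) (gT : finGroupType) (G : {group gT}) (eps : R) (p : nat) :
  solvable G -> (0 < eps)%R -> prstar_ge G eps -> prime p ->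
  (powR (2 / eps) (6 / eps) < (p%:R : R))%R ->
  forall P : {group gT}, P \in 'Syl_p(G) -> (P \subset 'F(G))%g.
Proof.
move=> solG eps_gt0 prG pr_p lt_p P; rewrite inE => sylP.
have [pG | p'G] := boolP (p %| #|G|); last first.
  by rewrite (card1_trivg _) ?sub1G // (card_Hall sylP) part_p'nat // p'natE.
apply: Fitting_max (pgroup_nil (pHall_pgroup sylP)).
apply: (sol_Sylow_normal pr_p sylP _ solG) => r a pr_r ra dvd_a a_modp.
have [eq_rp | neq_rp] := eqVneq r p; first by apply: pnat_modn_eq1 a_modp; rewrite -eq_rp.
have lt_ap := prstar_rnat_index_Syl_lt eps_gt0 prG pr_p pG lt_p sylP pr_r neq_rp ra dvd_a.
by rewrite -a_modp modn_small.
Qed.
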